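(* Let $(\mathcal V,\mathcal W,\lambda)$ be a FTvN system with $\dim(\mathcal V)\ge2$, and let $C$ be its center. Then $C=\{0\}$ under either of the following conditions: (i) for $x,y\in\mathcal V$, $\langle\lambda(x),\lambda(y)\rangle=0$ implies $x=0$ or $y=0$; (ii) for $x,y\in\mathcal V$, $0=\langle x,y\rangle=\langle\lambda(x),\lambda(y)\rangle$ implies $x=0$ or $y=0$.
   Context: A Fan-Theobald-von Neumann (FTvN) system is a triple $(\mathcal V,\mathcal W,\lambda)$ where $\mathcal V,\mathcal W$ are real inner product spaces and $\lambda:\mathcal V\to\mathcal W$ is a map such that: (A1) $\|\lambda(x)\|=\|x\|$ for all $x$; (A2) $\langle x,y\rangle\le\langle\lambda(x),\lambda(y)\rangle$ for all $x,y$; (A3) for every $c\in\mathcal V$ and $q\in\lambda(\mathcal V)$ there exists $x$ with $\lambda(x)=q$ and $\langle c,x\rangle=\langle\lambda(c),\lambda(x)\rangle$. Elements $x,y$ commute if $\langle x,y\rangle=\langle\lambda(x),\lambda(y)\rangle$; the center $C$ is the set of elements commuting with every element of $\mathcal V$. *)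

From HB Require Import structures.
From mathcomp Require Import all_boot all_order all_algebra.
From mathcomp Require Import reals.
Set Implicit Arguments. Unset Strict Implicit. Unset Printing Implicit Defensive.
Import Order.TTheory GRing.Theory Num.Theory.
Local Open Scope ring_scope.

Definition is_inner_product (R : realType) (V : lmodType R) (ip : V -> V -> R) : Prop :=
  [/\ (forall x y, ip x y = ip y x),
      (forall a x y z, ip (a *: x + y) z = a * ip x z + ip y z),
      (forall x, 0 <= ip x x) &
      (forall x, ip x x = 0 -> x = 0)].

Definition ipnorm (R : realType) (V : lmodType R) (ip : V -> V -> R) (x : V) : R :=
  Num.sqrt (ip x x).

Definition FTvN_system (R : realType) (V W : lmodType R)
  (ipV : V -> V -> R) (ipW : W -> W -> R) (lam : V -> W) : Prop :=
  [/\ is_inner_product ipV, is_inner_product ipW,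
      (forall x, ipnorm ipW (lam x) = ipnorm ipV x),
      (forall x y, ipV x y <= ipW (lam x) (lam y)) &
      (forall c q, (exists u, lam u = q) ->
         exists x, lam x = q /\ ipV c x = ipW (lam c) (lam x))].

Definition commute_ftvn (R : realType) (V W : lmodType R)
  (ipV : V -> V -> R) (ipW : W -> W -> R) (lam : V -> W) (x y : V) : Prop :=
  ipV x y = ipW (lam x) (lam y).

Definition in_center (R : realType) (V W : lmodType R)
  (ipV : V -> V -> R) (ipW : W -> W -> R) (lam : V -> W) (c : V) : Prop :=
  forall y, commute_ftvn ipV ipW lam c y.

Definition dim_ge2 (R : realType) (V : lmodType R) : Prop :=
  exists x y : V, forall a b : R, a *: x + b *: y = 0 -> a = 0 /\ b = 0.

(* In dimension at least two every vector c has a nonzero orthogonal vector y.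
   If c is central then <lam c, lam y> = <c, y> = 0, so condition (ii) forces
   c = 0; condition (i) is a special case of (ii). *)
From HB Require Import structures.
From mathcomp Require Import all_boot all_order all_algebra.
From mathcomp Require Import reals.
From mathcomp Require Import lra.
Set Implicit Arguments. Unset Strict Implicit. Unset Printing Implicit Defensive.
Import Order.TTheory GRing.Theory Num.Theory.
Local Open Scope ring_scope.

Section InnerProduct.
Variables (R : realType) (V : lmodType R) (ip : V -> V -> R).
Hypothesis ip_inner : is_inner_product ip.

Lemma ip0l z : ip 0 z = 0.
Proof.
have [_ ipDl _ _] := ip_inner.
have := ipDl 1 0 0 z; rewrite scaler0 addr0 mul1r => ip00.
by apply: (addrI (ip 0 z)); rewrite addr0 -ip00.
Qed.

Lemma ip_lincombl a b x y z :
  ip (a *: x + b *: y) z = a * ip x z + b * ip y z.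
Proof.
have [_ ipDl _ _] := ip_inner.
by rewrite ipDl -[b *: y]addr0 ipDl ip0l addr0.
Qed.

Lemma ipnorm_eq0 x : ipnorm ip x = 0 -> x = 0.
Proof.
have [_ _ ip_ge0 ip_eq0] := ip_inner.
move/eqP; rewrite sqrtr_eq0 => ip_le0.
by apply: ip_eq0; apply/eqP; rewrite eq_le ip_le0 ip_ge0.
Qed.

Lemma exists_nonzero_orthogonal :
  dim_ge2 V -> forall c, exists2 y : V, y != 0 & ip c y = 0.
Proof.
have [ip_sym _ _ _] := ip_inner.
move=> [x1 [x2 x12_free]] c.
have [c_x1|c_x1] := eqVneq (ip c x1) 0.
  exists x1 => //; apply/eqP => x1_0.
  have [] := x12_free 1 0; first by rewrite x1_0 scaler0 scale0r addr0.
  by move/eqP; rewrite oner_eq0.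
exists (ip c x2 *: x1 + (- ip c x1) *: x2).
  apply/eqP => /x12_free [_ /eqP].
  by rewrite oppr_eq0 (negbTE c_x1).
by rewrite ip_sym ip_lincombl (ip_sym x1) (ip_sym x2); lra.
Qed.

End InnerProduct.

Section FTvNCenter.
Variables (R : realType) (V W : lmodType R).
Variables (ipV : V -> V -> R) (ipW : W -> W -> R) (lam : V -> W).
Hypothesis hsys : FTvN_system ipV ipW lam.

Lemma lam0 : lam 0 = 0.
Proof.
have [ipV_inner ipW_inner lam_norm _ _] := hsys.
apply: (ipnorm_eq0 ipW_inner).
by rewrite lam_norm /ipnorm ip0l // sqrtr0.
Qed.

Lemma in_center0 : in_center ipV ipW lam 0.
Proof.
have [ipV_inner ipW_inner _ _ _] := hsys.
by move=> y; rewrite /commute_ftvn lam0 !ip0l.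
Qed.

Lemma in_center_eq0 :
  dim_ge2 V ->
  (forall x y : V, ipV x y = 0 -> ipW (lam x) (lam y) = 0 -> x = 0 \/ y = 0) ->
  forall c : V, in_center ipV ipW lam c -> c = 0.
Proof.
have [ipV_inner _ _ _ _] := hsys.
move=> hdim orth_free c c_central.
have [y /eqP y_neq0 cy0] := exists_nonzero_orthogonal ipV_inner hdim c.
have lam_cy0 : ipW (lam c) (lam y) = 0 by rewrite -c_central.
by case: (orth_free c y cy0 lam_cy0).
Qed.

End FTvNCenter.

Theorem proposition6p8 (R : realType) (V W : lmodType R)
  (ipV : V -> V -> R) (ipW : W -> W -> R) (lam : V -> W)
  (hsys : FTvN_system ipV ipW lam) (hdim : dim_ge2 V) :
  ((forall x y : V, ipW (lam x) (lam y) = 0 -> x = 0 \/ y = 0) \/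
   (forall x y : V, ipV x y = 0 -> ipW (lam x) (lam y) = 0 -> x = 0 \/ y = 0)) ->
  forall c : V, in_center ipV ipW lam c <-> c = 0.
Proof.
move=> hcond c; split; last by move->; exact: in_center0.
have orth_free : forall x y : V,
    ipV x y = 0 -> ipW (lam x) (lam y) = 0 -> x = 0 \/ y = 0.
  by case: hcond => [lam_free x y _|//]; exact: lam_free.
exact: in_center_eq0.
Qed.
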